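(* Assume $\Theta_0\ne\emptyset$, fix $T$ and $C_1,\dots,C_T>0$, and consider menu tuples $(\mathcal{F}_1,\dots,\mathcal{F}_T)$ with each $\mathcal{F}_t\subseteq\bar{\mathcal{F}}$ for which best-response strategies exist for every type. Then $$\inf_{Q}\,V(Q;\mathcal{F}_1,\dots,\mathcal{F}_T)\;=\;\sup_{\mathcal{F}'_1,\dots,\mathcal{F}'_T}\ \inf_{Q}\,V(Q;\mathcal{F}'_1,\dots,\mathcal{F}'_T)$$ (infima over all probability distributions $Q$ on $\Theta$, supremum over all such menu tuples) holds if and only if the multi-round contract with menus $\mathcal{F}_1,\dots,\mathcal{F}_T$ is incentive-aligned.
   Context: Let $\Theta=\Theta_0\sqcup\Theta_1$ be a set of types (null and nonnull) and $(P_\theta)_{\theta\in\Theta}$ probability distributions on a measurable space $\mathcal{Z}$. Fix an ambient class $\bar{\mathcal{F}}$ of measurable functions $\mathcal{Z}\to[0,\infty)$. Multi-round profit license game for an agent of type $\theta$: fix $T\ge1$, costs $C_1,\dots,C_T>0$, and menus $\mathcal{F}_1,\dots,\mathcal{F}_T$. Set $L(0)=0$. For $t=1,\dots,T$: the agent chooses a withdrawal $P(t)\in[0,L(t-1)]$ and $I_t\in\{0,1\}$. If $I_t=1$, the agent pays $C_t$, chooses $f_t\in\mathcal{F}_t$, a fresh observation $Z_t\sim P_\theta$ independent of the past is drawn, and $L(t)=(L(t-1)+C_t-P(t))\,f_t(Z_t)$; if $I_t=0$, $L(t)=L(t-1)-P(t)$. An agent strategy specifies $P(t),I_t,f_t$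 as measurable functions of the history $(P(s),I_s,f_s,Z_s)_{s<t}$. Totals: $L=L(T)$, $P=\sum_tP(t)$, $C=\sum_tC_tI_t$; $\mathbb{E}_\theta$ is expectation for type $\theta$. The contract is incentive-aligned if $\mathbb{E}_{\theta_0}[L+P-C]\le0$ for all $\theta_0\in\Theta_0$ and all strategies. Best response: an agent of type $\theta$ uses a strategy maximizing $\mathbb{E}_\theta[L+P-C]$ if this maximum is $>0$; otherwise it opts out, i.e. uses $I_t=0$ for all $t$ (so $L=P=C=0$). The principal's utility $u:\Theta\times[0,\infty)\to\mathbb{R}$ satisfies: for $\theta\in\Theta_1$, $u(\theta,\cdot)$ nondecreasing with $0\le u(\theta,x)\le a_1<\infty$; for $\theta\in\Theta_0$, $u(\theta,\cdot)$ nonincreasing, $u(\theta,0)\le0$, $u(\theta,x)<0$ for $x>0$. The principal receives $u(\theta,L+P)$ if the agent runs at least one stage and $0$ if the agent opts out. $V(Q;\mathcal{F}_1,\dots,\mathcal{F}_T)$ denotes the principal's expected utility when $\theta\sim Q$ and the agent plays a best-response strategy (measurability assumed as needed). *)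

From HB Require Import structures.
From mathcomp Require Import all_boot all_order all_algebra.
From mathcomp Require Import all_classical all_reals.
From mathcomp Require Import ereal measure measurable_realfun lebesgue_measure lebesgue_integral probability.

Set Implicit Arguments.
Unset Strict Implicit.
Unset Printing Implicit Defensive.

Import Order.TTheory GRing.Theory Num.Theory.
Local Open Scope classical_set_scope.
Local Open Scope ring_scope.

(*  Stages are numbered t = 1..T; the stage being played after a history h   *)
(*  is (size h).+1.  Costs C t and menus F t are indexed by t in 1..T.       *)

Section ProfitLicense.
Variable R : realType.
Variables (dZ : measure_display) (Z : measurableType dZ).

(* An agent's move at one stage: withdrawal P(t), participation I_t, f_t. *)
Record action := Action { wd : R; pl : bool; fn : Z -> R }.

(* A history entry: the move and, if I_t = 1, the observation Z_t. *)
Definition entry := (action * option Z)%type.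
Definition history := seq entry.

Definition strategy := history -> action.

Variable C : nat -> R.

Definition step (t : nat) (L : R) (e : entry) : R :=
  if pl e.1 then
    match e.2 with
    | Some z => (L + C t - wd e.1) * fn e.1 z
    | None => L + C t - wd e.1 (* never occurs on consistent histories *)
    end
  else L - wd e.1.

Fixpoint ledger_from (t : nat) (L : R) (h : history) : R :=
  match h with
  | [::] => L
  | e :: h' => ledger_from t.+1 (step t L e) h'
  end.

Definition ledger (h : history) : R := ledger_from 1 0 h.

Definition withdrawn (h : history) : R := \sum_(e <- h) wd e.1.

Fixpoint cost_from (t : nat) (h : history) : R :=
  match h with
  | [::] => 0
  | e :: h' => (if pl e.1 then C t else 0) + cost_from t.+1 h'
  end.

Definition cost (h : history) : R := cost_from 1 h.

Definition played (h : history) : bool := has (fun e => pl e.1) h.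

Inductive reach (s : strategy) : history -> Prop :=
| reach0 : reach s [::]
| reachS h o : reach s h ->
    match o with Some _ => pl (s h) = true | None => pl (s h) = false end ->
    reach s (rcons h (s h, o)).

Variable T : nat.
Variable F : nat -> set (Z -> R).

Definition feasible (s : strategy) (h : history) : Prop :=
  0 <= wd (s h) <= ledger h /\ (pl (s h) -> F (size h).+1 (fn (s h))).

Definition valid (s : strategy) : Prop :=
  forall h, reach s h -> (size h < T)%N -> feasible s h.

Variable P : probability Z R.

(* Expectation of a function of the final history, for the process in which
   at each stage with I_t = 1 a fresh observation Z_t ~ P is drawn
   independently of the past: an iterated integral over the stages.
   [expect s Phi n h] is the conditional expectation given the history h
   with n stages remaining. *)
Fixpoint expect (s : strategy) (Phi : history -> \bar R) (n : nat)
    (h : history) : \bar R :=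
  match n with
  | 0 => Phi h
  | n'.+1 =>
      if pl (s h) then (\int[P]_z expect s Phi n' (rcons h (s h, Some z)))%E
      else expect s Phi n' (rcons h (s h, None))
  end.

Definition Exp (s : strategy) (Phi : history -> \bar R) : \bar R :=
  expect s Phi T [::].

(* Measurability (assumed "as needed"): the conditional expectations that are
   integrated at each stage are measurable functions of the new observation. *)
Definition regular_for (s : strategy) (Phi : history -> \bar R) : Prop :=
  forall n h, reach s h -> (size h + n.+1)%N = T -> pl (s h) ->
    measurable_fun [set: Z] (fun z : Z => expect s Phi n (rcons h (s h, Some z))).

Definition Phi_LP (h : history) : \bar R := (ledger h + withdrawn h)%:E.
Definition Phi_C (h : history) : \bar R := (cost h)%:E.

(* E[L + P - C], computed as E[L + P] - E[C] (L + P >= 0, C bounded). *)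
Definition agent_value (s : strategy) : \bar R :=
  (Exp s Phi_LP - Exp s Phi_C)%E.

End ProfitLicense.

Arguments reach {R dZ Z}.

Section Contract.
Variable R : realType.
Variables (dZ : measure_display) (Z : measurableType dZ).
Variables (dT : measure_display) (Theta : measurableType dT).
Variable Ptheta : Theta -> probability Z R.
Variable Theta0 : set Theta.
Variable u : Theta -> R -> R.
Variable T : nat.
Variable C : nat -> R.

Definition strats (F : nat -> set (Z -> R)) : set (strategy R Z) :=
  [set s | valid C T F s /\
     forall th, regular_for T (Ptheta th) s (Phi_LP C) /\
                regular_for T (Ptheta th) s (Phi_C C)].

Definition avalue (th : Theta) (s : strategy R Z) : \bar R :=
  agent_value C T (Ptheta th) s.

Definition incentive_aligned (F : nat -> set (Z -> R)) : Prop :=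
  forall th0, Theta0 th0 -> forall s, strats F s -> (avalue th0 s <= 0)%E.

Definition opts_out (s : strategy R Z) : Prop :=
  forall h, reach s h -> (size h < T)%N -> pl (s h) = false.

Definition best_responses_exist (F : nat -> set (Z -> R)) : Prop :=
  forall th, exists s, strats F s /\
    forall s', strats F s' -> (avalue th s' <= avalue th s)%E.

Definition best_response (F : nat -> set (Z -> R)) (th : Theta)
    (s : strategy R Z) : Prop :=
  strats F s /\
  ((exists s', strats F s' /\ (0 < avalue th s')%E) ->
     forall s', strats F s' -> (avalue th s' <= avalue th s)%E) /\
  (~ (exists s', strats F s' /\ (0 < avalue th s')%E) -> opts_out s).

Definition Phi_U (th : Theta) (h : history R Z) : \bar R :=
  if played h then (u th (ledger C h + withdrawn h))%:E else 0%E.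

Definition principal_utility (th : Theta) (s : strategy R Z) : \bar R :=
  Exp T (Ptheta th) s (Phi_U th).

(* Menu tuple F with a best-response profile beta (one best response per
   type), satisfying the standing assumptions: F_t subset of Fbar,
   best responses exist, and measurability as needed. *)
Definition admissible (Fbar : set (Z -> R)) (F : nat -> set (Z -> R))
    (beta : Theta -> strategy R Z) : Prop :=
  (forall t, (1 <= t <= T)%N -> F t `<=` Fbar) /\
  best_responses_exist F /\
  (forall th, best_response F th (beta th)) /\
  (forall th, regular_for T (Ptheta th) (beta th) (Phi_U th)) /\
  measurable_fun setT (fun th => principal_utility th (beta th)).

(* V(Q; F_1..F_T) when the types play the best-response profile beta. *)
Definition V (Q : probability Theta R) (beta : Theta -> strategy R Z) : \bar R :=
  (\int[Q]_th principal_utility th (beta th))%E.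

Definition infV (beta : Theta -> strategy R Z) : \bar R :=
  ereal_inf (range (fun Q : probability Theta R => V Q beta)).

End Contract.

(* Evaluating V at the Dirac distribution on a type th bounds inf_Q V by the
   principal's utility against th.  A participating agent always ends with
   L + P >= 0, so against a null type this utility is <= 0; since Theta0 is
   nonempty, every inf_Q V is <= 0, while empty menus, under which every agent
   opts out, attain 0.  The supremum is thus 0.  If the contract is
   incentive-aligned, null types opt out and nonnull types yield u >= 0, so
   V >= 0 for every Q.  Otherwise some null type has a strategy of positive
   expected profit; its best response then has E[L + P] > E[C] >= 0, so
   L + P > 0 with positive probability, where u is strictly negative, and the
   Dirac distribution on that type gives V < 0. *)

From HB Require Import structures.
From mathcomp Require Import all_boot all_order all_algebra.
From mathcomp Require Import all_classical all_reals.
From mathcomp Require Import ereal measure measurable_realfun lebesgue_measure lebesgue_integral probability.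

Set Implicit Arguments.
Unset Strict Implicit.
Unset Printing Implicit Defensive.

Import Order.TTheory GRing.Theory Num.Theory.
Local Open Scope classical_set_scope.
Local Open Scope ring_scope.

Section integral_sign.
Local Open Scope ereal_scope.
Context d (T : measurableType d) (R : realType) (mu : {measure set T -> \bar R}).

Lemma integral_le0N (f : T -> \bar R) :
  (forall x, f x <= 0) -> \int[mu]_x - f x = - \int[mu]_x f x.
Proof.
move=> f_le0.
transitivity (- \int[mu]_x - - f x).
  by rewrite [in RHS]integral_ge0N ?oppeK // => x _; rewrite oppe_ge0.
by congr (- _); apply: eq_integral => x _; rewrite oppeK.
Qed.

Lemma integral_le0 (f : T -> \bar R) : (forall x, f x <= 0) -> \int[mu]_x f x <= 0.
Proof.
move=> f_le0; rewrite -[leLHS]oppeK -integral_le0N // oppe_le0.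
by apply: integral_ge0 => x _; rewrite oppe_ge0.
Qed.

(* Were the integral of [f] zero, [f] would vanish a.e., hence so would [g]. *)
Lemma integral_lt0 (f g : T -> \bar R) :
  measurable_fun setT f -> measurable_fun setT g ->
  (forall x, f x <= 0) -> (forall x, 0 <= g x) -> (forall x, 0 < g x -> f x < 0) ->
  0 < \int[mu]_x g x -> \int[mu]_x f x < 0.
Proof.
move=> mf mg f_le0 g_ge0 fg_lt0 int_g_gt0.
rewrite lt_neqAle integral_le0 // andbT; apply/negP => /eqP int_f0.
have f_ae0 : ae_eq mu setT f (cst 0).
  apply/(ae_eq_integral_abs mu measurableT mf).
  transitivity (\int[mu]_x - f x); first by apply: eq_integral => x _; rewrite lee0_abs.
  by rewrite integral_le0N // int_f0 oppe0.
have : \int[mu]_x g x = \int[mu]_x cst 0 x.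
  apply: ae_eq_integral => //.
  apply: filterS f_ae0 => x f0 /f0 fx0; apply/eqP; rewrite eq_le g_ge0 andbT leNgt.
  by apply/negP => /fg_lt0; rewrite fx0 ltxx.
by rewrite integral0 => g0; move: int_g_gt0; rewrite g0 ltxx.
Qed.

End integral_sign.

Section history.
Variables (R : realType) (dZ : measure_display) (Z : measurableType dZ).
Variable C : nat -> R.
Implicit Types h : history R Z.

Lemma ledger_from_rcons t L h e :
  ledger_from C t L (rcons h e) = step C (t + size h) (ledger_from C t L h) e.
Proof.
elim: h t L => [|e' h IH] t L /=; first by rewrite addn0.
by rewrite IH addSnnS.
Qed.

Lemma ledger_rcons h e : ledger C (rcons h e) = step C (size h).+1 (ledger C h) e.
Proof. by rewrite /ledger ledger_from_rcons add1n. Qed.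

Lemma withdrawn_rcons h e : withdrawn (rcons h e) = withdrawn h + wd e.1.
Proof. by rewrite /withdrawn big_rcons. Qed.

Lemma played_rcons h e : played (rcons h e) = played h || pl e.1.
Proof. by rewrite /played has_rcons orbC. Qed.

Lemma cost_from_ge0 T h t : (forall t, (1 <= t <= T)%N -> 0 < C t) ->
  (1 <= t)%N -> (t + size h <= T.+1)%N -> 0 <= cost_from C t h.
Proof.
move=> C_gt0; elim: h t => [|e h IH] t //= t_ge1 tT.
apply: addr_ge0; last by apply: IH => //; rewrite addSnnS.
case: (pl e.1) => //; apply/ltW/C_gt0; rewrite t_ge1 /=.
by apply: leq_trans (leq_addr (size h) t) _; rewrite -ltnS -addnS.
Qed.

Lemma cost_ge0 T h : (forall t, (1 <= t <= T)%N -> 0 < C t) ->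
  (size h <= T)%N -> 0 <= cost C h.
Proof. by move=> C_gt0 hT; apply: cost_from_ge0 C_gt0 _ _; rewrite ?add1n. Qed.

Lemma cost_unplayed h : ~~ played h -> cost C h = 0.
Proof.
rewrite /cost; elim: h 1%N => [|e h IH] t //=.
by rewrite /played /= negb_or => /andP[/negbTE -> /IH ->]; rewrite addr0.
Qed.

End history.

Section valid_strategy.
Variables (R : realType) (dZ : measure_display) (Z : measurableType dZ).
Variables (C : nat -> R) (T : nat) (F : nat -> set (Z -> R)).
Hypothesis C_gt0 : forall t, (1 <= t <= T)%N -> 0 < C t.
Hypothesis F_ge0 : forall t f z, (1 <= t <= T)%N -> F t f -> 0 <= f z.
Variable s : strategy R Z.
Hypothesis s_valid : valid C T F s.

Lemma valid_reach_inv h : reach s h -> (size h <= T)%N ->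
  [/\ 0 <= ledger C h, 0 <= withdrawn h &
      ~~ played h -> ledger C h = 0 /\ withdrawn h = 0].
Proof.
elim=> [|{}h o hr IH ho]; first by rewrite /ledger /withdrawn big_nil.
rewrite size_rcons => hT; have [L_ge0 W_ge0 unplayed0] := IH (ltnW hT).
have stage_ok : (1 <= (size h).+1 <= T)%N by rewrite ltnS hT.
have [/andP[wd_ge0 wd_le] fn_menu] := s_valid hr hT.
rewrite ledger_rcons withdrawn_rcons played_rcons /step /=.
case: o ho => [z|] /= ho; rewrite ho ?orbT ?orbF.
  split=> //; last exact: addr_ge0.
  apply: mulr_ge0; last exact: F_ge0 _ _ _ stage_ok (fn_menu ho).
  by rewrite subr_ge0 (le_trans wd_le) // lerDl ltW // C_gt0.
split; [by rewrite subr_ge0 | exact: addr_ge0 |].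
move=> /unplayed0[L0 W0]; rewrite L0 W0 in wd_le *.
have -> : wd (s h) = 0 by apply/eqP; rewrite eq_le wd_ge0 wd_le.
by rewrite subr0 addr0.
Qed.

Lemma ledger_withdrawn_ge0 h : reach s h -> (size h <= T)%N -> 0 <= ledger C h + withdrawn h.
Proof. by move=> hr hT; have [L_ge0 W_ge0 _] := valid_reach_inv hr hT; exact: addr_ge0. Qed.

Lemma ledger_withdrawn_unplayed h : reach s h -> (size h <= T)%N -> ~~ played h ->
  ledger C h + withdrawn h = 0.
Proof.
move=> hr hT unplayed; have [_ _ /(_ unplayed)[L0 W0]] := valid_reach_inv hr hT.
by rewrite L0 W0 addr0.
Qed.

End valid_strategy.

Section expectation.
Variables (R : realType) (dZ : measure_display) (Z : measurableType dZ).
Variables (P : probability Z R) (s : strategy R Z).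
Local Open Scope ereal_scope.

Lemma reach_rcons_some h z : reach s h -> pl (s h) -> reach s (rcons h (s h, Some z)).
Proof. by move=> hr hp; apply: reachS. Qed.

Lemma reach_rcons_none h : reach s h -> ~~ pl (s h) -> reach s (rcons h (s h, None)).
Proof. by move=> hr /negbTE hp; apply: reachS. Qed.

Lemma expect_ge0 (Phi : history R Z -> \bar R) n h : reach s h ->
  (forall h', reach s h' -> size h' = (size h + n)%N -> 0 <= Phi h') ->
  0 <= expect P s Phi n h.
Proof.
elim: n h => [|n IH] h hr Phi_ge0 /=; first by rewrite Phi_ge0 ?addn0.
have Phi_ge0' o :
  (forall h', reach s h' -> size h' = (size (rcons h (s h, o)) + n)%N -> 0 <= Phi h').
  by move=> h' hr'; rewrite size_rcons addSnnS; exact: Phi_ge0.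
case: ifPn => hp; last exact: IH _ (reach_rcons_none hr hp) (Phi_ge0' _).
by apply: integral_ge0 => z _; exact: IH _ (reach_rcons_some z hr hp) (Phi_ge0' _).
Qed.

Lemma expect_le0 (Phi : history R Z -> \bar R) n h : reach s h ->
  (forall h', reach s h' -> size h' = (size h + n)%N -> Phi h' <= 0) ->
  expect P s Phi n h <= 0.
Proof.
elim: n h => [|n IH] h hr Phi_le0 /=; first by rewrite Phi_le0 ?addn0.
have Phi_le0' o :
  (forall h', reach s h' -> size h' = (size (rcons h (s h, o)) + n)%N -> Phi h' <= 0).
  by move=> h' hr'; rewrite size_rcons addSnnS; exact: Phi_le0.
case: ifPn => hp; last exact: IH _ (reach_rcons_none hr hp) (Phi_le0' _).
by apply: integral_le0 => z; exact: IH _ (reach_rcons_some z hr hp) (Phi_le0' _).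
Qed.

Lemma Exp_ge0 T (Phi : history R Z -> \bar R) :
  (forall h, reach s h -> size h = T -> 0 <= Phi h) -> 0 <= Exp T P s Phi.
Proof. by move=> Phi_ge0; apply: expect_ge0 => //; exact: reach0. Qed.

Lemma Exp_le0 T (Phi : history R Z -> \bar R) :
  (forall h, reach s h -> size h = T -> Phi h <= 0) -> Exp T P s Phi <= 0.
Proof. by move=> Phi_le0; apply: expect_le0 => //; exact: reach0. Qed.

Lemma Exp_eq0 T (Phi : history R Z -> \bar R) :
  (forall h, reach s h -> size h = T -> Phi h = 0) -> Exp T P s Phi = 0.
Proof.
by move=> Phi0; apply/eqP; rewrite eq_le Exp_le0 ?Exp_ge0 // => h hr hT; rewrite Phi0.
Qed.

Lemma Exp_lt0 T (Phi1 Phi2 : history R Z -> \bar R) :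
  regular_for T P s Phi1 -> regular_for T P s Phi2 ->
  (forall h, reach s h -> size h = T -> 0 <= Phi1 h) ->
  (forall h, reach s h -> size h = T -> Phi2 h <= 0) ->
  (forall h, reach s h -> size h = T -> 0 < Phi1 h -> Phi2 h < 0) ->
  0 < Exp T P s Phi1 -> Exp T P s Phi2 < 0.
Proof.
move=> reg1 reg2 Phi1_ge0 Phi2_le0 Phi12_lt0.
suff : forall n h, reach s h -> (size h + n)%N = T ->
    0 < expect P s Phi1 n h -> expect P s Phi2 n h < 0.
  by apply; [exact: reach0 | exact: add0n].
elim=> [|n IH] h hr hT /=; first by apply: Phi12_lt0 => //; rewrite -hT addn0.
have hT' o : (size (rcons h (s h, o)) + n)%N = T by rewrite size_rcons addSnnS.
have final_size o h' : size h' = (size (rcons h (s h, o)) + n)%N -> size h' = T.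
  by rewrite hT'.
case: ifPn => hp; last exact: IH _ (reach_rcons_none hr hp) (hT' _).
apply: integral_lt0 => [| | z | z | z].
- exact: reg2 _ _ hr hT hp.
- exact: reg1 _ _ hr hT hp.
- by apply: expect_le0 (reach_rcons_some z hr hp) _ => h' hr' /final_size; exact: Phi2_le0.
- by apply: expect_ge0 (reach_rcons_some z hr hp) _ => h' hr' /final_size; exact: Phi1_ge0.
- exact: IH _ (reach_rcons_some z hr hp) (hT' _).
Qed.

End expectation.

Section opting_out.
Variables (R : realType) (dZ : measure_display) (Z : measurableType dZ).
Variables (C : nat -> R) (T : nat).
Implicit Types s : strategy R Z.

Lemma opts_out_unplayed s h : opts_out T s -> reach s h -> (size h <= T)%N -> ~~ played h.
Proof.
move=> s_out; elim=> [|{}h o hr IH _] //.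
by rewrite size_rcons played_rcons /= => hT; rewrite s_out // orbF IH // ltnW.
Qed.

Lemma valid_set0_opts_out s : valid C T (fun _ => set0) s -> opts_out T s.
Proof.
move=> s_valid h hr hT; apply/negbTE/negP => played_h.
by have [_ /(_ played_h)] := s_valid h hr hT.
Qed.

Definition optout : strategy R Z := fun _ => Action 0 false (fun _ => 0).

Lemma ledger_optout h : reach optout h -> ledger C h = 0.
Proof. by elim=> [|{}h o _ IH _] //; rewrite ledger_rcons /step /= IH subr0. Qed.

Lemma optout_valid F : valid C T F optout.
Proof. by move=> h hr _; split=> //=; rewrite ledger_optout // lexx. Qed.

End opting_out.

Arguments optout {R dZ Z}.

Section contract.
Variables (R : realType) (dZ : measure_display) (Z : measurableType dZ).
Variables (dT : measure_display) (Theta : measurableType dT).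
Variables (Ptheta : Theta -> probability Z R) (Theta0 : set Theta).
Variables (Fbar : set (Z -> R)) (u : Theta -> R -> R) (T : nat) (C : nat -> R).
Hypothesis Fbar_ge0 : forall f z, Fbar f -> 0 <= f z.
Hypothesis u_nonnull_ge0 : forall th x, ~ Theta0 th -> 0 <= x -> 0 <= u th x.
Hypothesis u_null0 : forall th, Theta0 th -> u th 0 <= 0.
Hypothesis u_null_lt0 : forall th x, Theta0 th -> 0 < x -> u th x < 0.
Hypothesis Theta0_neq0 : Theta0 !=set0.
Hypothesis C_gt0 : forall t, (1 <= t <= T)%N -> 0 < C t.
Local Open Scope ereal_scope.

Lemma u_null_le0 th x : Theta0 th -> (0 <= x)%R -> (u th x <= 0)%R.
Proof.
move=> null_th; rewrite le_eqVlt => /predU1P[<- | x_gt0]; first exact: u_null0.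
exact/ltW/u_null_lt0.
Qed.

Lemma admissible_menu_ge0 F b : admissible Ptheta u T C Fbar F b ->
  forall t f z, (1 <= t <= T)%N -> F t f -> (0 <= f z)%R.
Proof. by move=> [F_sub _] t f z tT /(F_sub t tT); exact: Fbar_ge0. Qed.

Lemma principal_utility_null_le0 F b th : admissible Ptheta u T C Fbar F b ->
  Theta0 th -> principal_utility Ptheta u T C th (b th) <= 0.
Proof.
move=> bF null_th; have [_ [_ [b_br _]]] := bF; have [[b_valid _] _] := b_br th.
apply: Exp_le0 => h hr hT; rewrite /Phi_U; case: ifP => // _.
rewrite lee_fin u_null_le0 //.
exact: (ledger_withdrawn_ge0 C_gt0 (admissible_menu_ge0 bF) b_valid hr (eq_leq hT)).
Qed.

Lemma infV_le_principal_utility F b th : admissible Ptheta u T C Fbar F b ->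
  infV Ptheta u T C b <= principal_utility Ptheta u T C th (b th).
Proof.
move=> [_ [_ [_ [_ mPU]]]]; apply: ereal_inf_lbound.
exists (\d_th : probability Theta R) => //.
by rewrite /V integral_dirac // diracT mul1e.
Qed.

Lemma infV_le0 F b : admissible Ptheta u T C Fbar F b -> infV Ptheta u T C b <= 0.
Proof.
move=> bF; have [th0 null_th0] := Theta0_neq0.
exact: le_trans (infV_le_principal_utility th0 bF) (principal_utility_null_le0 bF null_th0).
Qed.

Lemma principal_utility_opts_out th s : opts_out T s ->
  principal_utility Ptheta u T C th s = 0.
Proof.
move=> s_out; apply: Exp_eq0 => h hr hT.
by rewrite /Phi_U ifN // (opts_out_unplayed s_out hr (eq_leq hT)).
Qed.

Lemma avalue_set0 th s : strats Ptheta T C (fun _ => set0) s -> avalue Ptheta T C th s = 0.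
Proof.
move=> [s_valid _]; have s_out := valid_set0_opts_out s_valid.
have set0_ge0 t (f : Z -> R) z : (1 <= t <= T)%N -> set0 f -> (0 <= f z)%R by [].
have unplayed h : reach s h -> size h = T -> ~~ played h.
  by move=> hr hT; exact: opts_out_unplayed s_out hr (eq_leq hT).
rewrite /avalue /agent_value !Exp_eq0 ?sube0 // => h hr hT.
  by rewrite /Phi_C cost_unplayed // unplayed.
by rewrite /Phi_LP (ledger_withdrawn_unplayed C_gt0 set0_ge0 s_valid hr (eq_leq hT)) // unplayed.
Qed.

Lemma optout_strats F : strats Ptheta T C F optout.
Proof. by split=> [|th]; [exact: optout_valid | split=> n h _ _]. Qed.

Lemma optout_admissible : admissible Ptheta u T C Fbar (fun _ => set0) (fun _ => optout).
Proof.
have optout_best th : forall s, strats Ptheta T C (fun _ => set0) s ->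
    avalue Ptheta T C th s <= avalue Ptheta T C th optout.
  by move=> s s_strats; rewrite !avalue_set0 //; exact: optout_strats.
split; first by move=> t _; exact: sub0set.
split; first by move=> th; exists optout; split; [exact: optout_strats | exact: optout_best].
split; first by move=> th; split; [exact: optout_strats | split=> // _; exact: optout_best].
split; first by move=> th n h _ _.
rewrite (_ : (fun th => _) = cst 0); first exact: measurable_cst.
by apply: funext => th; rewrite principal_utility_opts_out.
Qed.

Lemma infV_optout : infV Ptheta u T C (fun _ => optout) = 0.
Proof.
apply/eqP; rewrite eq_le (infV_le0 optout_admissible) /=.
apply: le_ereal_inf_tmp => _ [Q _ <-]; apply: integral_ge0 => th _.
by rewrite principal_utility_opts_out.
Qed.

Lemma sup_infV_eq0 : ereal_sup [set infV Ptheta u T C b | b in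
    [set b | exists F, admissible Ptheta u T C Fbar F b]] = 0.
Proof.
apply/eqP; rewrite eq_le; apply/andP; split.
  by apply: ge_ereal_sup => _ [b [F bF] <-]; exact: infV_le0 bF.
rewrite -infV_optout; apply: ereal_sup_ubound; exists (fun _ => optout) => //.
by exists (fun _ => set0); exact: optout_admissible.
Qed.

Lemma incentive_aligned_principal_utility_ge0 F b th :
  admissible Ptheta u T C Fbar F b -> incentive_aligned Ptheta Theta0 T C F ->
  0 <= principal_utility Ptheta u T C th (b th).
Proof.
move=> bF aligned; have [_ [_ [b_br _]]] := bF; have [[b_valid _] [_ b_out]] := b_br th.
have [null_th | nonnull_th] := pselect (Theta0 th).
  rewrite principal_utility_opts_out //; apply: b_out => -[s [s_strats s_gt0]].
  by move: (aligned th null_th s s_strats); rewrite leNgt s_gt0.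
apply: Exp_ge0 => h hr hT; rewrite /Phi_U; case: ifP => // _.
rewrite lee_fin u_nonnull_ge0 //.
exact: (ledger_withdrawn_ge0 C_gt0 (admissible_menu_ge0 bF) b_valid hr (eq_leq hT)).
Qed.

Lemma infV_incentive_aligned F b : admissible Ptheta u T C Fbar F b ->
  incentive_aligned Ptheta Theta0 T C F -> infV Ptheta u T C b = 0.
Proof.
move=> bF aligned; apply/eqP; rewrite eq_le (infV_le0 bF) /=.
apply: le_ereal_inf_tmp => _ [Q _ <-]; apply: integral_ge0 => th _.
exact: incentive_aligned_principal_utility_ge0 bF aligned.
Qed.

Lemma principal_utility_lt0 F b th s : admissible Ptheta u T C Fbar F b ->
  Theta0 th -> strats Ptheta T C F s -> 0 < avalue Ptheta T C th s ->
  principal_utility Ptheta u T C th (b th) < 0.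
Proof.
move=> bF null_th s_strats s_gt0; have [_ [_ [b_br [regU _]]]] := bF.
have [b_strats [b_max _]] := b_br th; have [b_valid /(_ th)[b_regLP _]] := b_strats.
have b_gt0 : 0 < avalue Ptheta T C th (b th).
  exact: lt_le_trans s_gt0 (b_max (ex_intro _ s (conj s_strats s_gt0)) s s_strats).
have F_ge0 := admissible_menu_ge0 bF.
have LP_b_ge0 h : reach (b th) h -> size h = T -> (0 <= ledger C h + withdrawn h)%R.
  by move=> hr hT; exact: (ledger_withdrawn_ge0 C_gt0 F_ge0 b_valid hr (eq_leq hT)).
have LP_gt0 : 0 < Exp T (Ptheta th) (b th) (Phi_LP C).
  apply: lt_le_trans b_gt0 _; apply: geeDl; rewrite oppe_le0.
  by apply: Exp_ge0 => h _ hT; rewrite lee_fin (cost_ge0 C_gt0) ?hT.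
apply: Exp_lt0 LP_gt0; [exact: b_regLP | exact: regU | | |].
- by move=> h hr hT; rewrite lee_fin LP_b_ge0.
- move=> h hr hT; rewrite /Phi_U; case: ifP => // _.
  by rewrite lee_fin u_null_le0 // LP_b_ge0.
- move=> h hr hT; rewrite lte_fin => LP_h_gt0; rewrite /Phi_U ifT ?lte_fin ?u_null_lt0 //.
  apply: contraTT LP_h_gt0 => unplayed.
  by rewrite (ledger_withdrawn_unplayed C_gt0 F_ge0 b_valid hr (eq_leq hT)) ?ltxx.
Qed.

End contract.

Theorem theoremB2 (R : realType)
  (dZ : measure_display) (Z : measurableType dZ)
  (dT : measure_display) (Theta : measurableType dT)
  (Ptheta : Theta -> probability Z R)
  (Theta0 : set Theta)
  (Fbar : set (Z -> R))
  (hFbar : forall f, Fbar f -> measurable_fun setT f /\ forall z, 0 <= f z)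
  (u : Theta -> R -> R) (a1 : R)
  (hu1 : forall th, ~ Theta0 th ->
     (forall x y, 0 <= x -> x <= y -> u th x <= u th y) /\
     (forall x, 0 <= x -> 0 <= u th x <= a1))
  (hu0 : forall th, Theta0 th ->
     (forall x y, 0 <= x -> x <= y -> u th y <= u th x) /\
     u th 0 <= 0 /\ (forall x, 0 < x -> u th x < 0))
  (hTheta0 : Theta0 !=set0)
  (T : nat) (hT : (1 <= T)%N)
  (C : nat -> R) (hC : forall t, (1 <= t <= T)%N -> 0 < C t)
  (F : nat -> set (Z -> R)) (beta : Theta -> strategy R Z)
  (hF : admissible Ptheta u T C Fbar F beta) :
  infV Ptheta u T C beta =
    ereal_sup [set infV Ptheta u T C beta' | beta' in
       [set b | exists F', admissible Ptheta u T C Fbar F' b]]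
  <-> incentive_aligned Ptheta Theta0 T C F.
Proof.
have Fbar_ge0 f z : Fbar f -> 0 <= f z by case/hFbar.
have u_nonnull_ge0 th x : ~ Theta0 th -> 0 <= x -> 0 <= u th x.
  by move=> nonnull_th x_ge0; have /andP[] := (hu1 th nonnull_th).2 x x_ge0.
have u_null0 th : Theta0 th -> u th 0 <= 0 by case/hu0 => _ [].
have u_null_lt0 th x : Theta0 th -> 0 < x -> u th x < 0 by case/hu0 => _ [_]; apply.
rewrite (sup_infV_eq0 Ptheta Fbar_ge0 u_null0 u_null_lt0 hTheta0 hC).
split=> [infV0 | aligned]; last first.
  exact: (infV_incentive_aligned Fbar_ge0 u_nonnull_ge0 u_null0 u_null_lt0
            hTheta0 hC hF aligned).
move=> th null_th s s_strats; rewrite leNgt; apply/negP => s_gt0.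
have := infV_le_principal_utility th hF; rewrite infV0 leNgt.
by rewrite (principal_utility_lt0 Fbar_ge0 u_null0 u_null_lt0 hC hF null_th
              s_strats s_gt0).
Qed.
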